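(* For all integers $m\ge1$, $n\ge0$ and $l\in\{1,\dots,d\}$, $$\alpha\Big(\prod_{r=n}^{n+m-1}(A_r+B^l_r)\Big)\ge\gamma(1-\gamma)^{m-1}\mathcal G_{[n,n+m)}-\mathcal H^l_{[n,n+m)}.$$
   Context: Setting (random batch CBO). Fix integers $N\ge2$, $d\ge1$, batch size $P\ge2$, drift $\gamma\in(0,1)$, noise level $\zeta\ge0$; $\mathcal N=\{1,\dots,N\}$. Weight functions $\omega_{S,j}:(\mathbb R^d)^N\to[0,\infty)$ for nonempty $S\subseteq\mathcal N$, $j\in\mathcal N$, with $\sum_{j\in S}\omega_{S,j}=1$ and $\omega_{S,j}=0$ for $j\notin S$. $\mathcal A$ is the set of partitions of $\mathcal N$ into $\lceil N/P\rceil$ batches, all of size $P$ except possibly one of size at most $P$; $(\mathcal B^n)_{n\ge0}$ i.i.d. uniform on $\mathcal A$; $[i]_n$ is the batch of $\mathcal B^n$ containing $i$. Noise arrays $(\eta^{i,l}_n)_{i,l}$ are i.i.d. in $n$ with $\mathbb E\eta^{i,l}_n=0$, $\mathbb E|\eta^{i,l}_n|^2\le\zeta^2$; initial data, batches, and noises are mutually independent. The dynamics is $\mathbf x^i_{n+1}=\mathbf x^i_n-\gamma(\mathbf x^i_n-\bar{\mathbf x}^{[i]_n,*}_n)-\sum_{l=1}^d(x^{i,l}_n-\bar x^{[i]_n,*,l}_n)\eta^{i,l}_n\mathbf e_l$ with $\bar{\mathbf x}^{S,*}_n=\sum_j\omega_{S,j}(X_n)\mathbf x^j_n$, $X_n=(\mathbf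 x^1_n,\dots,\mathbf x^N_n)$. Matrix notation: $W_n:=(\omega_{[i]_n,j}(X_n))_{i,j}$, $H^l_n:=\mathrm{diag}(\eta^{1,l}_n,\dots,\eta^{N,l}_n)$, $A_n:=(1-\gamma)I_N+\gamma W_n$, $B^l_n:=-H^l_n(I_N-W_n)$ (so that $\mathfrak x^l_{n+1}=(A_n+B^l_n)\mathfrak x^l_n$ with $\mathfrak x^l_n=(x^{1,l}_n,\dots,x^{N,l}_n)^\top$). Products are ordered as $\prod_{k=n_1}^{n_2}M_k:=M_{n_2}\cdots M_{n_1}$. $\alpha(A):=\min_{i,j}\sum_k\min\{a_{ik},a_{jk}\}$; $\|A\|_{1,\infty}:=\max_i\sum_j|a_{ij}|$. $\mathcal G_{[n,n+m)}:=\min_{i,j}|\{r:n\le r<n+m,[i]_r=[j]_r\}|$ and $\mathcal H^l_{[n,n+m)}:=2\big[\prod_{r=n}^{n+m-1}(1+2\|H^l_r\|_{1,\infty})-1\big]$. *)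

From HB Require Import structures.
From mathcomp Require Import all_boot all_order all_algebra.
Set Implicit Arguments. Unset Strict Implicit. Unset Printing Implicit Defensive.
Import Order.TTheory GRing.Theory Num.Theory.
Local Open Scope ring_scope.

Section Defs.
Variables (R : realFieldType) (N d : nat).

(* A configuration X = (x^1,...,x^N), row i = particle x^i in R^d. *)
Definition config := 'M[R]_(N, d).

Definition weightfun := {set 'I_N} -> config -> 'I_N -> R.

Definition weights_ok (omega : weightfun) : Prop :=
  [/\ (forall (S : {set 'I_N}) (X : config) (j : 'I_N), 0 <= omega S X j),
      (forall (S : {set 'I_N}) (X : config), S != set0 ->
          \sum_(j in S) omega S X j = 1)
    & (forall (S : {set 'I_N}) (X : config) (j : 'I_N), j \notin S ->
          omega S X j = 0)].

Definition batch_partition (P : nat) (B : {set {set 'I_N}}) : bool :=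
  [&& partition B [set: 'I_N],
      #|B| == ((N + P - 1) %/ P)%N,
      [forall S in B, #|S| <= P]
    & #|[set S in B | #|S| != P]| <= 1]%N.

Definition batch_of (Bt : nat -> {set {set 'I_N}}) (n : nat) (i : 'I_N) :=
  pblock (Bt n) i.

Definition xbar (omega : weightfun) (S : {set 'I_N}) (X : config) (l : 'I_d) : R :=
  \sum_j omega S X j * X j l.

(* The random batch CBO dynamics (pathwise) *)
Fixpoint traj (gamma : R) (omega : weightfun) (Bt : nat -> {set {set 'I_N}})
  (eta : nat -> 'I_N -> 'I_d -> R) (X0 : config) (n : nat) : config :=
  match n with
  | 0 => X0
  | n'.+1 =>
      let X := traj gamma omega Bt eta X0 n' in
      \matrix_(i < N, l < d)
        (X i l - gamma * (X i l - xbar omega (batch_of Bt n' i) X l)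
               - (X i l - xbar omega (batch_of Bt n' i) X l) * eta n' i l)
  end.

Definition Wmat (omega : weightfun) (Bt : nat -> {set {set 'I_N}}) (n : nat)
  (X : config) : 'M[R]_N :=
  \matrix_(i, j) omega (batch_of Bt n i) X j.

Definition Hmat (eta : nat -> 'I_N -> 'I_d -> R) (n : nat) (l : 'I_d) : 'M[R]_N :=
  diag_mx (\row_i eta n i l).

Definition Amat (gamma : R) (W : 'M[R]_N) : 'M[R]_N :=
  (1 - gamma)%:M + gamma *: W.

Definition Bmat (H W : 'M[R]_N) : 'M[R]_N := - (H *m (1%:M - W)).

(* ordered product  prod_{k=n}^{n+m-1} M_k = M_{n+m-1} ... M_n *)
Fixpoint mprod (M : nat -> 'M[R]_N) (n m : nat) : 'M[R]_N :=
  match m with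
  | 0 => 1%:M
  | m'.+1 => M (n + m')%N *m mprod M n m'
  end.

(* minimum over all pairs (i, j) of a function; the list is nonempty as N >= 1 *)
Definition pairs_list (T : Type) (f : 'I_N -> 'I_N -> T) : seq T :=
  [seq f i j | i <- enum 'I_N, j <- enum 'I_N].

Definition minpairs (f : 'I_N -> 'I_N -> R) : R :=
  let s := pairs_list f in \big[Num.min/head 0 s]_(x <- s) x.

Definition minpairsn (f : 'I_N -> 'I_N -> nat) : nat :=
  let s := pairs_list f in \big[minn/head 0%N s]_(x <- s) x.

Definition alpha (A : 'M[R]_N) : R :=
  minpairs (fun i j => \sum_k Num.min (A i k) (A j k)).

Definition norm1inf (A : 'M[R]_N) : R :=
  \big[Num.max/0]_i \sum_j `|A i j|.

Definition Gcount (Bt : nat -> {set {set 'I_N}}) (n m : nat) : nat :=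
  minpairsn (fun i j => count (fun r => batch_of Bt r i == batch_of Bt r j)
                              (iota n m)).

Definition Hcount (eta : nat -> 'I_N -> 'I_d -> R) (l : 'I_d) (n m : nat) : R :=
  2 * (\prod_(n <= r < n + m) (1 + 2 * norm1inf (Hmat eta r l)) - 1).

End Defs.

From HB Require Import structures.
From mathcomp Require Import all_boot all_order all_algebra.
From mathcomp Require Import ring lra.
Import Order.TTheory GRing.Theory Num.Theory.
Set Implicit Arguments. Unset Strict Implicit. Unset Printing Implicit Defensive.
Local Open Scope ring_scope.

(* Write P = prod_r A_r for the noiseless product and Q = prod_r (A_r + B_r).
   1. Row-sum norms: rowsum is subadditive and submultiplicative, so a
      telescoping induction gives  rowsum (Q - P) <= prod_r (1 + b_r) - 1
      whenever every A_r has row sums <= 1 and every B_r row sums <= b_r.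
   2. Overlaps: overlap M i j = sum_k min(M_ik, M_jk) (so alpha = min overlap)
      moves by at most rowsum (Q-P) i + rowsum (Q-P) j from P to Q.
   3. Since A_r = (1-gamma) I + gamma W_r with W_r nonnegative and
      stochastic, the entries of P dominate gamma (1-gamma)^(m-1) sum_r W_r,
      hence overlap P i j >= gamma (1-gamma)^(m-1) sum_r overlap W_r i j,
      and overlap W_r i j = 1 whenever i and j share their batch at time r.
   4. B_r = -H_r (I - W_r) has row sums <= 2 ||H_r||. *)

Section RowSums.
Variables (R : realFieldType) (N : nat).
Implicit Types (M : 'M[R]_N) (i : 'I_N).

Definition rowsum M i : R := \sum_j `|M i j|.

Lemma rowsum_ge0 M i : 0 <= rowsum M i.
Proof. by apply: sumr_ge0 => j _. Qed.

Lemma rowsum_add M1 M2 i : rowsum (M1 + M2) i <= rowsum M1 i + rowsum M2 i.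
Proof.
rewrite /rowsum -big_split /=; apply: ler_sum => j _.
by rewrite mxE ler_normD.
Qed.

Lemma rowsum_opp M i : rowsum (- M) i = rowsum M i.
Proof. by apply: eq_bigr => j _; rewrite mxE normrN. Qed.

(* Submultiplicativity: row i of M1 *m M2 is a combination of rows of M2. *)
Lemma rowsum_mul M1 M2 b i :
  (forall t, rowsum M2 t <= b) -> rowsum (M1 *m M2) i <= rowsum M1 i * b.
Proof.
move=> hM2.
apply: (le_trans (y := \sum_j \sum_t `|M1 i t| * `|M2 t j|)).
  apply: ler_sum => j _; rewrite mxE; apply: (le_trans (ler_norm_sum _ _ _)).
  by apply: ler_sum => t _; rewrite normrM.
rewrite exchange_big /= /rowsum mulr_suml; apply: ler_sum => t _.
by rewrite -mulr_sumr; apply: ler_wpM2l => //; apply: hM2.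
Qed.

Lemma sum_kronecker i (a : R) : \sum_j (a *+ (i == j)) = a.
Proof.
rewrite (bigD1 i) //= eqxx big1 ?addr0 // => j.
by rewrite eq_sym => /negbTE ->.
Qed.

Lemma rowsum1 i : rowsum 1%:M i = 1.
Proof.
rewrite -[RHS](sum_kronecker i); apply: eq_bigr => j _.
by rewrite mxE normrMn normr1.
Qed.

Lemma rowsum_le_norm1inf M i : rowsum M i <= norm1inf M.
Proof. exact: (le_bigmax _ (rowsum M)). Qed.

Lemma norm1inf_ge0 M : 0 <= norm1inf M.
Proof.
apply: (big_ind (fun x => 0 <= x)) => // [x y hx _|i _]; first by rewrite le_max hx.
exact: rowsum_ge0.
Qed.

End RowSums.

Section Products.
Variables (R : realFieldType) (N : nat).

Lemma prod1D_ge1 (b : nat -> R) (n m : nat) :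
  (forall r, 0 <= b r) -> 1 <= \prod_(n <= r < m) (1 + b r).
Proof.
move=> hb; apply: (big_ind (fun x => 1 <= x)) => // [x y hx hy|r _].
  by rewrite -[1]mulr1 ler_pM.
by rewrite lerDl.
Qed.

Lemma mprod_rowsum (F : nat -> 'M[R]_N) (c : nat -> R) (n m : nat) (i : 'I_N) :
  (forall r, 0 <= c r) -> (forall r t, rowsum (F r) t <= c r) ->
  rowsum (mprod F n m) i <= \prod_(n <= r < n + m) c r.
Proof.
move=> c0 hF; elim: m i => [|m IH] i.
  by rewrite addn0 big_geq // rowsum1.
rewrite addnS big_nat_recr ?leq_addr //= mulrC.
apply: le_trans (rowsum_mul _ _ IH) _.
by apply: ler_wpM2r; [apply: prodr_ge0 | apply: hF].
Qed.

Lemma mprod_perturb (A B : nat -> 'M[R]_N) (b : nat -> R) (n m : nat) (i : 'I_N) :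
  (forall r, 0 <= b r) ->
  (forall r t, rowsum (A r) t <= 1) -> (forall r t, rowsum (B r) t <= b r) ->
  rowsum (mprod (fun r => A r + B r) n m - mprod A n m) i
    <= \prod_(n <= r < n + m) (1 + b r) - 1.
Proof.
move=> b0 hA hB.
have hAB r t : rowsum (A r + B r) t <= 1 + b r.
  by apply: le_trans (rowsum_add _ _ _) _; apply: lerD.
elim: m i => [|m IH] i.
  rewrite addn0 big_geq // !subrr.
  by rewrite /rowsum big1 // => j _; rewrite !mxE normr0.
rewrite /=; set Q := mprod _ n m; set P := mprod A n m.
set pi := \prod_(n <= r < n + m) (1 + b r).
have pi1 : 1 <= pi by apply: prod1D_ge1.
have hQ t : rowsum Q t <= pi.
  by apply: mprod_rowsum => // r; apply: addr_ge0.
have -> : (A (n + m)%N + B (n + m)%N) *m Q - A (n + m)%N *m P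
    = A (n + m)%N *m (Q - P) + B (n + m)%N *m Q.
  by rewrite mulmxDl mulmxBr addrAC.
have dA := rowsum_mul (A (n + m)%N) i IH.
have dB := rowsum_mul (B (n + m)%N) i hQ.
have a1 := hA (n + m)%N i; have b1 := hB (n + m)%N i.
have -> : \prod_(n <= r < n + m.+1) (1 + b r) - 1
    = 1 * (pi - 1) + b (n + m)%N * pi.
  by rewrite addnS big_nat_recr ?leq_addr //= -/pi; ring.
apply: le_trans (rowsum_add _ _ _) _; apply: lerD.
- by apply: le_trans dA _; apply: ler_wpM2r; rewrite ?subr_ge0.
- by apply: le_trans dB _; apply: ler_wpM2r => //; apply: le_trans pi1.
Qed.

End Products.

Section Overlaps.
Variables (R : realFieldType) (N : nat).
Implicit Types (M P Q : 'M[R]_N) (i j : 'I_N).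

Definition overlap M i j : R := \sum_k Num.min (M i k) (M j k).

Lemma min_perturb (q1 q2 p1 p2 : R) :
  Num.min p1 p2 - `|q1 - p1| - `|q2 - p2| <= Num.min q1 q2.
Proof.
have b1 := normr_ge0 (q1 - p1); have b2 := normr_ge0 (q2 - p2).
have c1 : - `|q1 - p1| <= q1 - p1 by rewrite lerNl -normrN ler_norm.
have c2 : - `|q2 - p2| <= q2 - p2 by rewrite lerNl -normrN ler_norm.
have m1 : Num.min p1 p2 <= p1 by rewrite ge_min lexx.
have m2 : Num.min p1 p2 <= p2 by rewrite ge_min lexx orbT.
by rewrite le_min; apply/andP; split; lra.
Qed.

Lemma overlap_perturb P Q i j :
  overlap P i j - rowsum (Q - P) i - rowsum (Q - P) j <= overlap Q i j.
Proof.
rewrite /overlap /rowsum -!sumrB; apply: ler_sum => k _.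
by rewrite !mxE min_perturb.
Qed.

Lemma overlap_dominate (W : nat -> 'M[R]_N) (s : seq nat) P (c : R) i j :
  0 <= c ->
  (forall k, c * \sum_(r <- s) W r i k <= P i k) ->
  (forall k, c * \sum_(r <- s) W r j k <= P j k) ->
  c * \sum_(r <- s) overlap (W r) i j <= overlap P i j.
Proof.
move=> c0 hi hj; rewrite /overlap exchange_big mulr_sumr /=.
apply: ler_sum => k _; rewrite le_min; apply/andP; split.
- apply: le_trans (hi k); apply: ler_wpM2l => //.
  by apply: ler_sum => r _; rewrite ge_min lexx.
- apply: le_trans (hj k); apply: ler_wpM2l => //.
  by apply: ler_sum => r _; rewrite ge_min lexx orbT.
Qed.

(* Two equal rows of a nonnegative stochastic matrix overlap fully, so the
   overlaps accumulated along s count the times at which the rows coincide. *)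
Lemma count_le_overlap (W : nat -> 'M[R]_N) (a : pred nat) (s : seq nat) i j :
  (forall r i k, 0 <= W r i k) -> (forall r i, \sum_k W r i k = 1) ->
  (forall r, a r -> forall k, W r i k = W r j k) ->
  (count a s)%:R <= \sum_(r <- s) overlap (W r) i j.
Proof.
move=> W0 W1 hrows; elim: s => [|r s IH]; first by rewrite big_nil.
rewrite big_cons /= natrD lerD //.
case: (boolP (a r)) => [ar | _].
  by rewrite /overlap (eq_bigr (W r i)) ?W1 // => k _; rewrite -hrows ?minxx.
by apply: sumr_ge0 => k _; rewrite le_min !W0.
Qed.

End Overlaps.

Section PairMinima.
Variables (R : realFieldType) (N : nat).

Lemma bigmin_ge (s : seq R) (x0 c : R) :
  c <= x0 -> (forall x, x \in s -> c <= x) -> c <= \big[Num.min/x0]_(x <- s) x.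
Proof.
move=> h0; elim: s => [|y s IH] hs; first by rewrite big_nil.
rewrite big_cons le_min hs ?mem_head //= IH // => x hx.
by apply: hs; rewrite in_cons hx orbT.
Qed.

Lemma minpairs_ge (f : 'I_N -> 'I_N -> R) (c : R) :
  (0 < N)%N -> (forall i j, c <= f i j) -> c <= minpairs f.
Proof.
move=> N0 hf; rewrite /minpairs.
have hs x : x \in pairs_list f -> c <= x by move=> /allpairsP [[i j] [_ _ ->]].
have hin : f (Ordinal N0) (Ordinal N0) \in pairs_list f.
  by apply: allpairs_f; rewrite mem_enum.
move: hs hin; case: (pairs_list f) => [//|x s] hs _ /=.
by apply: bigmin_ge => //; apply: hs; rewrite mem_head.
Qed.

Lemma bigminn_le (s : seq nat) (x0 y : nat) :
  y \in s -> (\big[minn/x0]_(x <- s) x <= y)%N.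
Proof.
elim: s => [//|z s IH]; rewrite in_cons big_cons => /orP [/eqP -> | h].
  exact: geq_minl.
exact: leq_trans (geq_minr _ _) (IH h).
Qed.

Lemma minpairsn_le (f : 'I_N -> 'I_N -> nat) i j : (minpairsn f <= f i j)%N.
Proof. by apply: bigminn_le; apply: allpairs_f; rewrite mem_enum. Qed.

End PairMinima.

Section Averaging.
Variables (R : realFieldType) (N : nat) (g : R) (W : nat -> 'M[R]_N).
Hypotheses (g0 : 0 <= g) (g1 : g <= 1) (W0 : forall r i k, 0 <= W r i k).

Let c0 : 0 <= 1 - g. Proof. by rewrite subr_ge0. Qed.

Let Pm (n m : nat) : 'M[R]_N := mprod (fun r => Amat g (W r)) n m.

Lemma Amat_mulE (V Q : 'M[R]_N) i k :
  (Amat g V *m Q) i k = (1 - g) * Q i k + g * \sum_t V i t * Q t k.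
Proof. by rewrite /Amat mulmxDl mul_scalar_mx -scalemxAl !mxE. Qed.

Lemma Amat_mul_ge (V Q : 'M[R]_N) i k :
  (forall i k, 0 <= V i k) -> (forall i k, 0 <= Q i k) ->
  (1 - g) * Q i k + g * V i k * Q k k <= (Amat g V *m Q) i k.
Proof.
move=> V0 Q0; rewrite Amat_mulE -mulrA lerD2l ler_wpM2l //.
by rewrite (bigD1 k) //= lerDl sumr_ge0 // => t _; rewrite mulr_ge0.
Qed.

Lemma mprod_Amat_ge0 n m i k : 0 <= Pm n m i k.
Proof.
elim: m i k => [|m IH] i k; first by rewrite /Pm /= mxE mulrn_wge0.
rewrite /Pm /= Amat_mulE addr_ge0 ?mulr_ge0 ?IH //.
by rewrite sumr_ge0 // => t _; rewrite mulr_ge0 ?IH.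
Qed.

(* Each factor keeps at least the fraction 1 - g on the diagonal. *)
Lemma mprod_Amat_diag n m k : (1 - g) ^+ m <= Pm n m k k.
Proof.
elim: m => [|m IH]; first by rewrite /Pm /= mxE eqxx expr0.
apply: le_trans (Amat_mul_ge _ _ (W0 _) (@mprod_Amat_ge0 n m)).
rewrite exprS -[X in X <= _]addr0 lerD ?ler_wpM2l //.
by rewrite !mulr_ge0 ?mprod_Amat_ge0.
Qed.

Lemma mprod_Amat_lb n m i k :
  g * (1 - g) ^+ m * \sum_(r <- iota n m.+1) W r i k <= Pm n m.+1 i k.
Proof.
elim: m i k => [|m IH] i k.
  rewrite big_seq1 expr0 mulr1.
  apply: le_trans (Amat_mul_ge _ _ (W0 _) (@mprod_Amat_ge0 n 0)).
  by rewrite /Pm /= !mxE eqxx mulr1 addn0 lerDr mulr_ge0.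
apply: le_trans (Amat_mul_ge _ _ (W0 _) (@mprod_Amat_ge0 n m.+1)).
have -> : iota n m.+2 = iota n m.+1 ++ [:: (n + m.+1)%N].
  by rewrite -addn1 iotaD.
rewrite big_cat big_seq1.
set S := \sum_(r <- iota n m.+1) W r i k; set w := W (n + m.+1)%N i k.
have hi := ler_wpM2l c0 (IH i k).
have hk : g * w * (1 - g) ^+ m.+1 <= g * w * Pm n m.+1 k k.
  by rewrite ler_wpM2l ?mprod_Amat_diag // mulr_ge0 //; apply: W0.
have -> : g * (1 - g) ^+ m.+1 * (S + w)
    = (1 - g) * (g * (1 - g) ^+ m * S) + g * w * (1 - g) ^+ m.+1.
  by rewrite exprS; ring.
exact: lerD hi hk.
Qed.

Lemma rowsum_Amat r i : \sum_k W r i k = 1 -> rowsum (Amat g (W r)) i = 1.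
Proof.
move=> W1; rewrite /rowsum (eq_bigr (fun j => (1 - g) *+ (i == j) + g * W r i j)).
  by rewrite big_split /= sum_kronecker -mulr_sumr W1 mulr1 subrK.
by move=> j _; rewrite /Amat !mxE ger0_norm // addr_ge0 ?mulrn_wge0 ?mulr_ge0.
Qed.

End Averaging.

Lemma rowsum_Bmat (R : realFieldType) (N : nat) (H W : 'M[R]_N) (i : 'I_N) :
  (forall i k, 0 <= W i k) -> (forall i, \sum_k W i k = 1) ->
  rowsum (Bmat H W) i <= 2 * norm1inf H.
Proof.
move=> W0 W1; rewrite /Bmat rowsum_opp mulrC.
have hIW t : rowsum (1%:M - W) t <= 2.
  apply: le_trans (rowsum_add _ _ _) _; rewrite rowsum1 rowsum_opp.
  by rewrite /rowsum (eq_bigr (W t)) ?W1 // => k _; rewrite ger0_norm.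
apply: le_trans (rowsum_mul _ _ hIW) _.
by rewrite ler_wpM2r ?rowsum_le_norm1inf.
Qed.

Section BatchWeights.
Variables (R : realFieldType) (N d P : nat) (omega : weightfun R N d).
Variable (Bt : nat -> {set {set 'I_N}}).
Hypotheses (homega : weights_ok omega) (hBt : forall n, batch_partition P (Bt n)).

Lemma Wmat_ge0 r X i k : 0 <= Wmat omega Bt r X i k.
Proof. by case: homega => w0 _ _; rewrite mxE w0. Qed.

Lemma Wmat_rowsum r X i : \sum_k Wmat omega Bt r X i k = 1.
Proof.
case: homega => _ w1 w2; under eq_bigr do rewrite mxE.
have iS : i \in batch_of Bt r i.
  rewrite mem_pblock; case/and4P: (hBt r) => /and3P[/eqP -> _ _] _ _ _.
  by rewrite in_setT.
rewrite (bigID (mem (batch_of Bt r i))) /= [X in _ + X]big1 ?addr0.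
  by apply: w1; apply/set0Pn; exists i.
by move=> j /w2.
Qed.

Lemma Wmat_same_batch r X i j k :
  batch_of Bt r i = batch_of Bt r j -> Wmat omega Bt r X i k = Wmat omega Bt r X j k.
Proof. by move=> e; rewrite !mxE e. Qed.

End BatchWeights.

Lemma alpha_mprod_lb (R : realFieldType) (N : nat) (g : R)
    (W H : nat -> 'M[R]_N) (Bt : nat -> {set {set 'I_N}}) (n m : nat) :
  (0 < N)%N -> 0 < g < 1 ->
  (forall r i k, 0 <= W r i k) -> (forall r i, \sum_k W r i k = 1) ->
  (forall r i j k, batch_of Bt r i = batch_of Bt r j -> W r i k = W r j k) ->
  g * (1 - g) ^+ m * (Gcount Bt n m.+1)%:R
    - 2 * (\prod_(n <= r < n + m.+1) (1 + 2 * norm1inf (H r)) - 1)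
  <= alpha (mprod (fun r => Amat g (W r) + Bmat (H r) (W r)) n m.+1).
Proof.
move=> N0 /andP[g0 g1] W0 W1 Wbatch.
pose b r := 2 * norm1inf (H r).
have b0 r : 0 <= b r by rewrite mulr_ge0 ?norm1inf_ge0.
set c := g * (1 - g) ^+ m.
have c0 : 0 <= c by rewrite mulr_ge0 ?exprn_ge0 ?subr_ge0 ?ltW.
set Q := mprod _ n m.+1.
pose Pm := mprod (fun r => Amat g (W r)) n m.+1.
have dev i : rowsum (Q - Pm) i <= \prod_(n <= r < n + m.+1) (1 + b r) - 1.
  apply: mprod_perturb => // r t.
  - by rewrite (rowsum_Amat (ltW g0) (ltW g1) W0 (W1 r t)).
  - exact: rowsum_Bmat.
have dom i k : c * \sum_(r <- iota n m.+1) W r i k <= Pm i k.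
  exact: mprod_Amat_lb (ltW g0) (ltW g1) W0 n m i k.
apply: minpairs_ge => // i j.
pose same r := batch_of Bt r i == batch_of Bt r j.
have hG : (Gcount Bt n m.+1 <= count same (iota n m.+1))%N.
  exact: minpairsn_le.
have hcount : (count same (iota n m.+1))%:R <= \sum_(r <- iota n m.+1) overlap (W r) i j.
  by apply: count_le_overlap => // r /eqP e k; apply: Wbatch.
have hP := overlap_dominate c0 (dom i) (dom j).
have hQ := overlap_perturb Pm Q i j.
have hGc : c * (Gcount Bt n m.+1)%:R <= c * \sum_(r <- iota n m.+1) overlap (W r) i j.
  by rewrite ler_wpM2l // (le_trans _ hcount) // ler_nat.
by move: (dev i) (dev j) hP hQ hGc; rewrite /overlap; lra.
Qed.

Theorem lemma4p3 (R : realFieldType) (N d P : nat) (gamma : R)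
  (omega : weightfun R N d) (Bt : nat -> {set {set 'I_N}})
  (eta : nat -> 'I_N -> 'I_d -> R) (X0 : config R N d) :
  (2 <= N)%N -> (1 <= d)%N -> (2 <= P)%N -> 0 < gamma < 1 ->
  weights_ok omega ->
  (forall n, batch_partition P (Bt n)) ->
  forall (m n : nat) (l : 'I_d), (1 <= m)%N ->
  let X := traj gamma omega Bt eta X0 in
  let W := fun r => Wmat omega Bt r (X r) in
  alpha (mprod (fun r => Amat gamma (W r) + Bmat (Hmat eta r l) (W r)) n m)
    >= gamma * (1 - gamma) ^+ (m - 1) * (Gcount Bt n m)%:R - Hcount eta l n m.
Proof.
move=> N2 _ _ g01 homega hBt m n l; case: m => [//|m] _; rewrite subn1.
apply: alpha_mprod_lb => //.
- exact: ltnW.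
- by move=> r i k; apply: Wmat_ge0.
- by move=> r i; apply: Wmat_rowsum.
- by move=> r i j k; apply: Wmat_same_batch.
Qed.
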